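(* Let $\mathbf{u}_j\in c_0$, $j\in\mathbb{N}_m$, $\mathcal{L}(\mathbf{x}):=[\langle\mathbf{u}_j,\mathbf{x}\rangle:j\in\mathbb{N}_m]$ for $\mathbf{x}\in\ell_1(\mathbb{N})$, and $\mathcal{L}^*(\mathbf{c}):=\sum_{j\in\mathbb{N}_m}c_j\mathbf{u}_j$. Let $\mathbf{y}_0\in\mathbb{R}^m$, let $\mathcal{Q}_{\mathbf{y}_0}:\mathbb{R}^m\to\mathbb{R}_+$ be convex, and $\lambda>0$. Then $\mathbf{x}_0\in\ell_1(\mathbb{N})$ is a solution of $$\inf\{\mathcal{Q}_{\mathbf{y}_0}(\mathcal{L}(\mathbf{x}))+\lambda\|\mathbf{x}\|_1:\mathbf{x}\in\ell_1(\mathbb{N})\}$$ if and only if there exists $\hat{\mathbf{c}}\in\mathbb{R}^m$ such that $$\hat{\mathbf{c}}=\mathrm{prox}_{\mathcal{Q}_{\mathbf{y}_0}^*}(\hat{\mathbf{c}}+\mathcal{L}(\mathbf{x}_0))\quad\text{and}\quad \mathbf{x}_0=\mathrm{prox}_{\|\cdot\|_1,\ell_2(\mathbb{N}),\mathcal{T}_0}\Big(\mathbf{x}_0-\frac1\lambda\mathcal{S}\mathcal{L}^*(\hat{\mathbf{c}})\Big).$$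
   Context: $\mathbb{R}_+:=[0,+\infty)$; $\mathbb{N}_m:=\{1,\dots,m\}$; $c_0$ is the space of real sequences tending to $0$, $\|\mathbf{u}\|_\infty=\sup_j|u_j|$; $\langle\mathbf{u},\mathbf{x}\rangle:=\sum_ju_jx_j$. $\mathcal{Q}_{\mathbf{y}_0}^*(\mathbf{c}):=\sup\{\langle\mathbf{a},\mathbf{c}\rangle_{\mathbb{R}^m}-\mathcal{Q}_{\mathbf{y}_0}(\mathbf{a}):\mathbf{a}\in\mathbb{R}^m\}$ is the convex conjugate. For a convex $\psi:\mathbb{R}^m\to\mathbb{R}\cup\{+\infty\}$, $\mathrm{prox}_\psi(\mathbf{a}):=\arg\min\{\frac12\|\mathbf{a}-\mathbf{c}\|_{\mathbb{R}^m}^2+\psi(\mathbf{c}):\mathbf{c}\in\mathbb{R}^m\}$. $\mathcal{T}_0:\ell_1(\mathbb{N})\to\ell_2(\mathbb{N})$ is the inclusion and $\mathrm{prox}_{\|\cdot\|_1,\ell_2(\mathbb{N}),\mathcal{T}_0}(\mathbf{x}):=\arg\min\{\frac12\|\mathbf{x}-\mathbf{z}\|_2^2+\|\mathbf{z}\|_1:\mathbf{z}\in\ell_1(\mathbb{N})\}=(\max\{|x_j|-1,0\}\mathrm{sign}(x_j):j\in\mathbb{N})$. For $\mathbf{u}\in c_0$, $\mathbb{N}(\mathbf{u}):=\{j:|u_j|=\|\mathbf{u}\|_\infty\}$ and the truncation $\mathcal{S}(\mathbf{u})$ is the sequence equal to $u_j$ for $j\in\mathbb{N}(\mathbf{u})$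 and $0$ otherwise. *)

From HB Require Import structures.
From mathcomp Require Import all_boot all_order all_algebra.
From mathcomp Require Import all_classical all_reals all_analysis.
Set Implicit Arguments. Unset Strict Implicit. Unset Printing Implicit Defensive.
Import Order.TTheory GRing.Theory Num.Theory.
Import numFieldNormedType.Exports.
Local Open Scope classical_set_scope.
Local Open Scope ring_scope.

Section Defs.
Variable R : realType.

Definition in_c0 (u : R^nat) : Prop := u @ \oo --> (0 : R).

Definition in_l1 (x : R^nat) : Prop := cvgn (series (fun k => `|x k|)).

Definition l1norm (x : R^nat) : R := limn (series (fun k => `|x k|)).

Definition seq_inner (u x : R^nat) : R := limn (series (fun k => u k * x k)).

Definition Lop (m : nat) (us : 'I_m -> R^nat) (x : R^nat) : 'I_m -> R :=
  fun j => seq_inner (us j) x.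

Definition Ladj (m : nat) (us : 'I_m -> R^nat) (c : 'I_m -> R) : R^nat :=
  fun k => \sum_(j < m) c j * us j k.

Definition vinner (m : nat) (a c : 'I_m -> R) : R := \sum_(j < m) a j * c j.
Definition vnorm2 (m : nat) (a : 'I_m -> R) : R := \sum_(j < m) a j ^+ 2.

Definition convex_fun (m : nat) (Q : ('I_m -> R) -> R) : Prop :=
  forall (a b : 'I_m -> R) (t : R), 0 <= t -> t <= 1 ->
    Q (fun j => t * a j + (1 - t) * b j) <= t * Q a + (1 - t) * Q b.

Definition conjugate (m : nat) (Q : ('I_m -> R) -> R) (c : 'I_m -> R) : \bar R :=
  ereal_sup (range (fun a : 'I_m -> R => (vinner a c - Q a)%:E)).

Definition is_prox (m : nat) (psi : ('I_m -> R) -> \bar R) (a p : 'I_m -> R) : Prop :=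
  forall c : 'I_m -> R,
    ((2^-1 * vnorm2 (fun j => a j - p j))%:E + psi p <=
     (2^-1 * vnorm2 (fun j => a j - c j))%:E + psi c)%E.

Definition supnorm (u : R^nat) : R := sup (range (fun j => `|u j|)).

(* truncation S(u): keep u_j for j in N(u) = {j : |u_j| = ||u||_inf}, 0 otherwise *)
Definition trunc (u : R^nat) : R^nat :=
  fun j => if `|u j| == supnorm u then u j else 0.

(* prox_{||.||_1, l_2(N), T_0}(x) = soft thresholding at level 1 *)
Definition prox_l1 (x : R^nat) : R^nat :=
  fun j => Num.max (`|x j| - 1) 0 * Num.sg (x j).

Definition is_solution (m : nat) (us : 'I_m -> R^nat) (Q : ('I_m -> R) -> R)
  (lam : R) (x0 : R^nat) : Prop :=
  in_l1 x0 /\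
  forall x : R^nat, in_l1 x ->
    Q (Lop us x0) + lam * l1norm x0 <= Q (Lop us x) + lam * l1norm x.

End Defs.

(* The proof splits the fixed-point system of the theorem into three
   independent equivalences:
   1. Fermat rule: x0 minimises Q (L x) + lam ||x||_1 iff some c is a
      subgradient of Q at L x0 such that v = L^* c is an l1-certificate for x0,
      i.e. |v_k| <= lam everywhere and v_k = - lam sgn (x0_k) on the support
      of x0.  The "only if" part needs a Lagrange multiplier, obtained from a
      finite-dimensional Hahn-Banach argument (one coordinate at a time) for
      jointly convex functions on R^m x X.
   2. c is a subgradient of Q at y iff c = prox_{Q^*} (c + y): one direction is
      the Fenchel equality, the other uses the convexity of Q^* along a segment
      towards some subgradient, which exists because Q is convex.
   3. v is an l1-certificate for x0 iff x0 is a fixed point of the soft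
      thresholding of x0 - v' / lam, where v' is the truncation of v to the
      coordinates where |v| attains its supremum; such coordinates exist
      because v vanishes at infinity. *)

From HB Require Import structures.
From mathcomp Require Import all_boot all_order all_algebra.
From mathcomp Require Import all_classical all_reals all_analysis.
From mathcomp Require Import ring lra.
Import Order.TTheory GRing.Theory Num.Theory.
Import numFieldNormedType.Exports.
Local Open Scope ring_scope.

Section ScalarFacts.
Context {R : realType}.

Lemma ler_of_vanishing_perturbation {A B K : R} : 0 <= K ->
  (forall t, 0 < t -> t <= 1 -> A <= B + t * K) -> A <= B.
Proof.
move=> K0 h; apply/ler_addgt0Pr => e e0.
pose t := e / (e + K + 1).
have d0 : 0 < e + K + 1 by lra.
have t0 : 0 < t by rewrite /t divr_gt0.
have t1 : t <= 1 by rewrite /t ler_pdivrMr // mul1r; lra.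
have tK : t * K <= e by rewrite /t mulrAC ler_pdivrMr //; nra.
have := h t t0 t1; lra.
Qed.

Lemma soft_threshold_fixed (a w : R) :
  a = Num.max (`|a + w| - 1) 0 * Num.sg (a + w) <->
  (a != 0 -> w = Num.sg a) /\ (a = 0 -> `|w| <= 1).
Proof.
split.
- move=> h; have [neg|pos|z] := ltrgtP (a + w) 0.
  + rewrite ltr0_sg // ltr0_norm // in h.
    have [hm|hm] := lerP (- (a + w) - 1) 0.
      rewrite max_r // mul0r in h; subst a; rewrite eqxx add0r in neg *.
      by split => // _; rewrite ltr0_norm //; lra.
    rewrite max_l ?ltW // in h; have ha : a < 0 by lra.
    by split => [_|h0]; [rewrite ltr0_sg //; lra|lra].
  + rewrite gtr0_sg // gtr0_norm // mulr1 in h.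
    have [hm|hm] := lerP (a + w - 1) 0.
      rewrite max_r // in h; subst a; rewrite eqxx add0r in pos *.
      by split => // _; rewrite gtr0_norm //; lra.
    rewrite max_l ?ltW // in h; have ha : 0 < a by lra.
    by split => [_|h0]; [rewrite gtr0_sg //; lra|lra].
  + rewrite z sgr0 mulr0 in h; subst a; rewrite eqxx add0r in z *.
    by split => // _; rewrite z normr0; lra.
- move=> [h1 h2]; have [neg|pos|z] := ltrgtP a 0.
  + have := h1 (ltr0_neq0 neg); rewrite ltr0_sg // => ->.
    by rewrite ltr0_sg ?ltr0_norm ?max_l; lra.
  + have := h1 (lt0r_neq0 pos); rewrite gtr0_sg // => ->.
    by rewrite gtr0_sg ?gtr0_norm ?max_l; lra.
  + by subst a; have := h2 erefl; rewrite add0r => hw; rewrite max_r ?mul0r //; lra.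
Qed.

Lemma soft_threshold_fixed_scaled {lam a r : R} : 0 < lam ->
  a = Num.max (`|a - lam^-1 * r| - 1) 0 * Num.sg (a - lam^-1 * r) <->
  (a != 0 -> r = - (lam * Num.sg a)) /\ (a = 0 -> `|r| <= lam).
Proof.
move=> lam0; have lam_neq0 : lam != 0 by rewrite gt_eqF.
have scale w : - (lam^-1 * r) = w <-> r = - (lam * w).
  split=> [<-|->]; rewrite mulrN opprK mulrA ?mulfV ?mulVf // mul1r //.
have bound : (lam^-1 * `|r| <= 1) = (`|r| <= lam).
  by rewrite mulrC ler_pdivrMr // mul1r.
rewrite soft_threshold_fixed normrN normrM gtr0_norm ?invr_gt0 // bound.
by split=> -[h1 h2]; split=> // a0; apply/scale; exact: h1.
Qed.

Lemma scalar_certificate (lam a v : R) : 0 <= lam ->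
  (forall t, 0 <= lam * (`|a + t| - `|a|) + t * v) ->
  `|v| <= lam /\ (a != 0 -> v = - (lam * Num.sg a)).
Proof.
move=> lam0 h; split.
  have hv := h (- v); have vv := normr_ge0 v.
  have hn := ler_wpM2l lam0 (ler_normB a v).
  have sq : v * v = `|v| * `|v| by rewrite -normrM ger0_norm // -expr2 sqr_ge0.
  nra.
move=> a0; have h1 := h a; have h2 := h (- a).
rewrite subrr normr0 -mulr2n -mulr_natl normrM (@ger0_norm _ 2) // in h1 h2.
have [neg|pos|z] := ltrgtP a 0; last by rewrite z eqxx in a0.
- rewrite ltr0_sg // ltr0_norm // in h1 h2 *.
  by apply/eqP; rewrite eq_le; apply/andP; split; nra.
- rewrite gtr0_sg // gtr0_norm // in h1 h2 *.
  by apply/eqP; rewrite eq_le; apply/andP; split; nra.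
Qed.

End ScalarFacts.

Section InnerProduct.
Context {R : realType} {m : nat}.
Implicit Types a b c : 'I_m -> R.

Lemma vinnerC a b : vinner a b = vinner b a.
Proof. by apply: eq_bigr => j _; rewrite mulrC. Qed.

Lemma vinnerB c a b : vinner c (fun j => a j - b j) = vinner c a - vinner c b.
Proof. by rewrite /vinner -sumrB; apply: eq_bigr => j _; rewrite mulrBr. Qed.

Lemma vinnerDZ c a b (s t : R) :
  vinner c (fun j => s * a j + t * b j) = s * vinner c a + t * vinner c b.
Proof. by rewrite /vinner !mulr_sumr -big_split; apply: eq_bigr => j _ /=; ring. Qed.

Lemma vinnerZ c (t : R) a : vinner c (fun j => t * a j) = t * vinner c a.
Proof. by rewrite /vinner mulr_sumr; apply: eq_bigr => j _; rewrite mulrCA. Qed.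

Lemma vnorm2Z (t : R) a : vnorm2 (fun j => t * a j) = t ^+ 2 * vnorm2 a.
Proof. by rewrite /vnorm2 mulr_sumr; apply: eq_bigr => j _; rewrite exprMn. Qed.

Lemma vnorm2_ge0 a : 0 <= vnorm2 a.
Proof. by apply: sumr_ge0 => j _; exact: sqr_ge0. Qed.

End InnerProduct.

Definition supported {R : realType} {m : nat} (k : nat) (z : 'I_m -> R) : Prop :=
  forall j : 'I_m, (k <= j)%N -> z j = 0.

(* Let Phi : R^m x X -> R
   be jointly convex on R^m x P, where P is a convex subset of X (convex
   combinations in X are given by mix), with Phi (0, x) >= 0 on P.  Then there
   is c in R^m with <c, z> <= Phi (z, x) for all z and all x in P.  The vector
   c is built coordinate by coordinate, as in the proof of Hahn-Banach. *)
Section LagrangeMultiplier.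
Local Open Scope classical_set_scope.
Context {R : realType} {m : nat} {X : Type} {P : X -> Prop}
  {mix : R -> X -> X -> X} {Phi : ('I_m -> R) -> X -> R}.
Hypothesis mixP : forall t x1 x2, 0 <= t -> t <= 1 -> P x1 -> P x2 -> P (mix t x1 x2).
Hypothesis Phi_convex : forall t z1 z2 x1 x2, 0 <= t -> t <= 1 -> P x1 -> P x2 ->
  Phi (fun j => t * z1 j + (1 - t) * z2 j) (mix t x1 x2) <=
  t * Phi z1 x1 + (1 - t) * Phi z2 x2.
Hypothesis Phi0_ge0 : forall x, P x -> 0 <= Phi (fun _ => 0) x.
Hypothesis P_nonempty : exists x, P x.

Section ExtensionStep.
Variables (k : nat) (k_lt_m : (k < m)%N).
Let e : 'I_m := Ordinal k_lt_m.

Let shift (z : 'I_m -> R) (s : R) : 'I_m -> R :=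
  fun j => z j + (if j == e then s else 0).

Lemma vinner_shift (a z : 'I_m -> R) (s : R) :
  vinner a (shift z s) = vinner a z + a e * s.
Proof.
rewrite /vinner /shift (eq_bigr (fun j => a j * z j + a j * (if j == e then s else 0)))
  => [|j _]; last by rewrite mulrDr.
rewrite big_split /=; congr (_ + _).
by rewrite (bigD1 e) //= eqxx big1 ?addr0 // => j /negbTE ->; rewrite mulr0.
Qed.

Lemma supported_at_e {z : 'I_m -> R} : supported k z -> z e = 0.
Proof. by apply. Qed.

Lemma supported_split {w : 'I_m -> R} : supported k.+1 w ->
  supported k (shift w (- w e)) /\ w = shift (shift w (- w e)) (w e).
Proof.
move=> hw; split.
  move=> j hj; rewrite /shift; case: eqP => [->|/eqP hje]; first by rewrite subrr.
  rewrite addr0 hw // ltn_neqAle hj andbT; apply: contra hje => /eqP hkj.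
  by apply/eqP/val_inj.
apply: funext => j; rewrite /shift; case: eqP => [->|]; last by rewrite !addr0.
by rewrite addrNK.
Qed.

Variable c : 'I_m -> R.
Hypothesis c_supported : supported k c.
Hypothesis c_sub : forall z x, supported k z -> P x -> vinner c z <= Phi z x.

(* Seen from c, every backward difference quotient of Phi in the direction
   e_k lies below every forward difference quotient. *)
Lemma slope_sandwich {z1 x1 s1 z2 x2 s2} :
  supported k z1 -> P x1 -> 0 < s1 -> supported k z2 -> P x2 -> 0 < s2 ->
  (vinner c z1 - Phi (shift z1 (- s1)) x1) / s1 <=
  (Phi (shift z2 s2) x2 - vinner c z2) / s2.
Proof.
move=> hz1 hx1 hs1 hz2 hx2 hs2.
have hs12 : 0 < s1 + s2 by lra.
have [t [t0 t1 ht ht']] : exists t, [/\ 0 <= t, t <= 1, t * (s1 + s2) = s2 &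
    (1 - t) * (s1 + s2) = s1].
  exists (s2 / (s1 + s2)); rewrite mulrBl mul1r mulfVK ?gt_eqF // addrK.
  by split=> //; [rewrite divr_ge0 // ltW|rewrite ler_pdivrMr // mul1r; lra].
have hz : supported k (fun j => t * z1 j + (1 - t) * z2 j).
  by move=> j hj; rewrite hz1 // hz2 // !mulr0 addr0.
have comb : (fun j => t * shift z1 (- s1) j + (1 - t) * shift z2 s2 j) =
            (fun j => t * z1 j + (1 - t) * z2 j).
  by apply: funext => j; rewrite /shift; case: (j == e); [nra|ring].
have hconv := Phi_convex _ (shift z1 (- s1)) (shift z2 s2) _ _ t0 t1 hx1 hx2.
have hsub := c_sub _ (mix t x1 x2) hz (mixP _ _ _ t0 t1 hx1 hx2).
rewrite comb vinnerDZ in hconv hsub.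
rewrite ler_pdivrMr // mulrAC ler_pdivlMr //.
have : 0 <= t * (Phi (shift z1 (- s1)) x1 - vinner c z1) +
            (1 - t) * (Phi (shift z2 s2) x2 - vinner c z2) by lra.
move/(mulr_ge0 (ltW hs12)); rewrite mulrDr !mulrA !(mulrC (s1 + s2)) ht ht'.
lra.
Qed.

(* The new k-th coordinate: the supremum of the backward slopes. *)
Let slopes := [set r | exists z x s, [/\ supported k z, P x, 0 < s &
  r = (vinner c z - Phi (shift z (- s)) x) / s]].

Lemma extension_step : exists c', supported k.+1 c' /\
  forall z x, supported k.+1 z -> P x -> vinner c' z <= Phi z x.
Proof.
have [x1 Px1] := P_nonempty.
have z0 : supported k (fun _ : 'I_m => 0 : R) by [].
have slopes_ub : ubound slopes ((Phi (shift (fun _ => 0) 1) x1 - vinner c (fun _ => 0)) / 1).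
  by move=> r [z [x [s [hz hx hs ->]]]]; apply: slope_sandwich.
have slopes_bounded : has_ubound slopes by eexists; exact: slopes_ub.
pose alpha := sup slopes.
exists (shift c alpha); split.
  move=> j hj; rewrite /shift c_supported ?(ltnW hj) // add0r ifF //.
  by apply: contraTF hj => /eqP ->; rewrite ltnn.
move=> w x hw Px; have [hz ->] := supported_split hw.
set z := shift w (- w e) in hz *; set s := w e.
have -> : vinner (shift c alpha) (shift z s) = vinner c z + alpha * s.
  rewrite vinner_shift vinnerC vinner_shift supported_at_e // mul0r addr0.
  by rewrite /shift eqxx c_supported ?leqnn // add0r vinnerC.
have [sneg|spos|->] := ltrgtP s 0.
- have : (vinner c z - Phi (shift z (- - s)) x) / (- s) <= alpha.
    by apply: ub_le_sup => //; exists z, x, (- s); split => //; rewrite oppr_gt0.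
  by rewrite opprK ler_pdivrMr ?oppr_gt0 //; lra.
- have : alpha <= (Phi (shift z s) x - vinner c z) / s.
    apply: ge_sup; first by exists ((vinner c z - Phi (shift z (- 1)) x) / 1), z, x, 1.
    by move=> r [z' [x' [s' [hz' hx' hs' ->]]]]; apply: slope_sandwich.
  by rewrite ler_pdivlMr //; lra.
- have -> : shift z 0 = z by apply: funext => j; rewrite /shift; case: (j == e); rewrite addr0.
  by rewrite mulr0 addr0; apply: c_sub.
Qed.

End ExtensionStep.

Lemma lagrange_multiplier : exists c, forall z x, P x -> vinner c z <= Phi z x.
Proof.
suff /(_ m (leqnn m)) [c [_ hc]] : forall k, (k <= m)%N -> exists c, supported k c /\
    forall z x, supported k z -> P x -> vinner c z <= Phi z x.
  by exists c => z x Px; apply: hc => // j; rewrite leqNgt ltn_ord.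
elim=> [_|k IH hk].
  exists (fun _ => 0); split => // z x hz Px.
  rewrite (_ : z = fun _ => 0); last by apply: funext => j; apply: hz.
  by rewrite /vinner big1 => [|j _]; [exact: Phi0_ge0|rewrite mul0r].
have [c [hc1 hc2]] := IH (ltnW hk).
exact: extension_step hc1 hc2.
Qed.

End LagrangeMultiplier.

Definition bounded_seq {R : realType} (u : R^nat) : Prop :=
  exists2 B : R, 0 <= B & forall n, `|u n| <= B.

Definition bump {R : realType} (k : nat) (a : R) : R^nat :=
  fun j => if j == k then a else 0.

Section Sequences.
Context {R : realType}.
Local Open Scope classical_set_scope.
Implicit Types (u v x : R^nat) (lam : R).

Lemma cvg_seriesDZ {a b : R^nat} (s t : R) {la lb : R} :
  series a @ \oo --> la -> series b @ \oo --> lb ->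
  series (fun k => s * a k + t * b k) @ \oo --> s * la + t * lb.
Proof.
move=> ha hb.
have -> : series (fun k => s * a k + t * b k) = (fun n => s * series a n + t * series b n).
  by apply: funext => n; rewrite /series /= big_split /= -!mulr_sumr.
by apply: cvgD; apply: cvgMl_tmp.
Qed.

Lemma c0_bounded {u} : in_c0 u -> bounded_seq u.
Proof.
move=> hu; have [N _ hN] := cvgr0_norm_lt _ hu _ ltr01.
have S0 : 0 <= \sum_(k < N) `|u k| by apply: sumr_ge0.
exists (1 + \sum_(k < N) `|u k|) => [|n]; first by rewrite addr_ge0.
have [nN|Nn] := ltnP n N; last by have := hN n Nn; rewrite /=; lra.
rewrite (bigD1 (Ordinal nN)) //=.
have : 0 <= \sum_(k < N | k != Ordinal nN) `|u k| by apply: sumr_ge0.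
lra.
Qed.

Lemma cvg_series_mul {u x} : bounded_seq u -> in_l1 x -> cvgn (series (fun k => u k * x k)).
Proof.
move=> [B B0 hB] hx; apply: normed_cvg.
apply: (@series_le_cvg _ _ (fun k => B * `|x k| + 0 * `|x k|)) => [n|n|n|].
- exact: normr_ge0.
- by rewrite mul0r addr0 mulr_ge0.
- by rewrite mul0r addr0 /= normrM ler_wpM2r.
- exact: cvgP _ (cvg_seriesDZ B 0 hx hx).
Qed.

Lemma in_l1DZ x1 x2 (s t : R) : in_l1 x1 -> in_l1 x2 -> in_l1 (fun k => s * x1 k + t * x2 k).
Proof.
move=> h1 h2.
apply: (@series_le_cvg _ _ (fun k => `|s| * `|x1 k| + `|t| * `|x2 k|)) => [n|n|n|].
- exact: normr_ge0.
- by rewrite addr_ge0 // mulr_ge0.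
- by rewrite (le_trans (ler_normD _ _)) // !normrM.
- exact: cvgP _ (cvg_seriesDZ `|s| `|t| h1 h2).
Qed.

Lemma seq_innerDZ u x1 x2 (s t : R) : bounded_seq u -> in_l1 x1 -> in_l1 x2 ->
  seq_inner u (fun k => s * x1 k + t * x2 k) = s * seq_inner u x1 + t * seq_inner u x2.
Proof.
move=> hu h1 h2; apply: cvg_lim => //.
rewrite (_ : (fun k => _) = fun k => s * (u k * x1 k) + t * (u k * x2 k)).
  by apply: cvg_seriesDZ; exact: cvg_series_mul.
by apply: funext => k; ring.
Qed.

Lemma l1norm_convex {x1 x2} {t : R} : 0 <= t -> t <= 1 -> in_l1 x1 -> in_l1 x2 ->
  l1norm (fun k => t * x1 k + (1 - t) * x2 k) <= t * l1norm x1 + (1 - t) * l1norm x2.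
Proof.
move=> t0 t1 h1 h2; have h := cvg_seriesDZ t (1 - t) h1 h2.
rewrite /l1norm -(cvg_lim _ h) //; apply: ler_lim; [exact: in_l1DZ|exact: cvgP _ h|].
have t1' : 0 <= 1 - t by lra.
apply: nearW => n; apply: ler_sum => k _; rewrite (le_trans (ler_normD _ _)) //.
by rewrite !normrM (ger0_norm t0) (ger0_norm t1').
Qed.

Lemma series_bump k (a : R) : series (bump k a) @ \oo --> a.
Proof.
apply: cvg_near_cst; exists k.+1 => // n /= kn.
rewrite /series /= big_mkord (bigD1 (Ordinal kn)) //= /bump eqxx big1 ?addr0 // => j jk.
by rewrite ifF //; apply: contraNF jk => /eqP jk; apply/eqP/val_inj.
Qed.

Lemma l1_bump x k (a : R) : in_l1 x -> in_l1 (fun j => x j + bump k a j) /\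
  l1norm (fun j => x j + bump k a j) = l1norm x - `|x k| + `|x k + a|.
Proof.
move=> hx; have h := cvg_seriesDZ 1 1 hx (series_bump k (`|x k + a| - `|x k|)).
rewrite (_ : (fun j => _) = fun j => `|x j + bump k a j|) in h; last first.
  by apply: funext => j; rewrite /bump; case: eqP => [->|_]; rewrite ?addr0 ?mulr0; ring.
split; first exact: cvgP _ h.
by rewrite /l1norm (cvg_lim _ h) // -/(l1norm x); ring.
Qed.

Lemma seq_inner_bump u x k (a : R) : bounded_seq u -> in_l1 x ->
  seq_inner u (fun j => x j + bump k a j) = seq_inner u x + a * u k.
Proof.
move=> hu hx; have h := cvg_seriesDZ 1 1 (cvg_series_mul hu hx) (series_bump k (a * u k)).
rewrite (_ : (fun j => _) = fun j => u j * (x j + bump k a j)) in h; last first.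
  by apply: funext => j; rewrite /bump; case: eqP => [->|_]; rewrite ?addr0 ?mulr0; ring.
by rewrite /seq_inner (cvg_lim _ h) //; ring.
Qed.

Lemma cvg_l1_pairing {v x} lam : bounded_seq v -> in_l1 x ->
  series (fun k => lam * `|x k| + v k * x k) @ \oo --> lam * l1norm x + seq_inner v x.
Proof.
move=> hv hx; have := cvg_seriesDZ lam 1 hx (cvg_series_mul hv hx).
by under eq_fun do rewrite mul1r; rewrite mul1r.
Qed.

Section Adjoint.
Context {m : nat} (us : 'I_m -> R^nat).

Lemma vinner_Lop c x : (forall j, bounded_seq (us j)) -> in_l1 x ->
  vinner c (Lop us x) = seq_inner (Ladj us c) x.
Proof.
move=> hb hx; apply/esym/cvg_lim => //.
have -> : series (fun k => Ladj us c k * x k) =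
    (fun n => \sum_(j < m) c j * series (fun k => us j k * x k) n).
  apply: funext => n; rewrite /series /Ladj /=.
  under eq_bigr do rewrite mulr_suml.
  rewrite exchange_big /=; apply: eq_bigr => j _; rewrite mulr_sumr.
  by apply: eq_bigr => k _; ring.
apply: cvg_big => [|j _]; first exact: add_continuous.
by apply: cvgMl_tmp; exact: cvg_series_mul.
Qed.

Lemma Ladj_c0 c : (forall j, in_c0 (us j)) -> in_c0 (Ladj us c).
Proof.
move=> hu; rewrite /in_c0 /Ladj [X in _ --> X](_ : 0 = \sum_(j < m) c j * 0).
  by apply: (@cvg_big R _ +%R 0 predT add_continuous) => j _; exact: cvgMl_tmp (hu j).
by rewrite big1 // => j _; rewrite mulr0.
Qed.

End Adjoint.

Lemma supnorm_bounds {v} {B : R} : (forall n, `|v n| <= B) ->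
  (forall n, `|v n| <= supnorm v) /\ supnorm v <= B.
Proof.
move=> hB; split => [n|].
  by apply: ub_le_sup; [exists B => _ [j _ <-]|exists n].
by apply: ge_sup; [exists `|v 0%N|, 0%N|move=> _ [n _ <-]].
Qed.

Lemma c0_supnorm_attained {v} : in_c0 v -> exists j, forall n, `|v n| <= `|v j|.
Proof.
move=> hv; have [v0|/existsNP [p /eqP vp]] := pselect (forall n, v n = 0).
  by exists 0%N => n; rewrite !v0.
have vp0 : 0 < `|v p| by rewrite normr_gt0.
have [N _ hN] := cvgr0_norm_lt _ hv _ vp0.
have pN : (p < N)%N by rewrite ltnNge; apply/negP => /hN /=; rewrite ltxx.
have [j _ jmax] := arg_maxP (fun i : 'I_N => `|v i|) (isT : predT (Ordinal pN)).
exists (nat_of_ord j) => n; have [nN|Nn] := ltnP n N; first exact: (jmax (Ordinal nN)).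
exact: le_trans (ltW (hN n Nn)) (jmax (Ordinal pN) isT).
Qed.

End Sequences.

Lemma trunc_cases {R : realType} (v : R^nat) k :
  (trunc v k = v k /\ `|v k| = supnorm v) \/ trunc v k = 0.
Proof. by rewrite /trunc; case: eqP => [h|_]; [left|right]. Qed.

(* -v / lam is coordinatewise a subgradient of ||.||_1 at x. *)
Definition l1_certificate {R : realType} (lam : R) (v x : R^nat) : Prop :=
  forall k, `|v k| <= lam /\ (x k != 0 -> v k = - (lam * Num.sg (x k))).

Section L1Certificates.
Context {R : realType} (lam : R) {v x0 : R^nat}.
Hypotheses (v_bounded : bounded_seq v) (x0_l1 : in_l1 x0).

(* Minimisers of lam ||x||_1 + <v, x> carry a certificate: perturb one
   coordinate at a time. *)
Lemma certificate_of_minimizer : 0 <= lam ->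
  (forall x, in_l1 x -> lam * l1norm x0 + seq_inner v x0 <= lam * l1norm x + seq_inner v x) ->
  l1_certificate lam v x0.
Proof.
move=> lam0 x0_min k; apply: scalar_certificate => // t.
have [hl hn] := l1_bump x0 k t x0_l1.
by have := x0_min _ hl; rewrite hn seq_inner_bump //; lra.
Qed.

(* Conversely a certificate makes lam ||x||_1 + <v, x> vanish at x0 and
   nonnegative everywhere. *)
Lemma minimizer_of_certificate : l1_certificate lam v x0 ->
  forall x, in_l1 x -> lam * l1norm x0 + seq_inner v x0 <= lam * l1norm x + seq_inner v x.
Proof.
move=> cert x hx.
have -> : lam * l1norm x0 + seq_inner v x0 = 0.
  rewrite -(cvg_lim _ (cvg_l1_pairing lam v_bounded x0_l1)) //.
  rewrite (_ : series _ = fun _ => 0) ?lim_cst //.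
  apply: funext => n; rewrite /series /= big1 // => k _.
  have [x0k|x0k] := eqVneq (x0 k) 0; first by rewrite x0k normr0 !mulr0 addr0.
  by rewrite (cert k).2 // {1}(normrEsg (x0 k)); ring.
have h := cvg_l1_pairing lam v_bounded hx.
rewrite -(cvg_lim _ h) //; apply: limr_ge; first exact: cvgP _ h.
apply: nearW => n; apply: sumr_ge0 => k _.
have := ler_wpM2r (normr_ge0 (x k)) (cert k).1.
have := ler_norm (- (v k * x k)); rewrite normrN normrM.
lra.
Qed.

End L1Certificates.

Lemma certificate_iff_fixed_point {R : realType} (lam : R) (v x : R^nat) :
  0 < lam -> in_c0 v ->
  l1_certificate lam v x <-> x = prox_l1 (fun k => x k - lam^-1 * trunc v k).
Proof.
move=> lam0 hv.
have -> : x = prox_l1 (fun k => x k - lam^-1 * trunc v k) <->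
    forall k, (x k != 0 -> trunc v k = - (lam * Num.sg (x k))) /\
              (x k = 0 -> `|trunc v k| <= lam).
  split=> [hx k|hx].
    by apply/(soft_threshold_fixed_scaled lam0); exact: (congr1 (fun f => f k) hx).
  by apply: funext => k; apply/(soft_threshold_fixed_scaled lam0); exact: hx.
split=> [cert k|fixed k].
  have [vk_le vk_sg] := cert k.
  have [sup_ub sup_le] := supnorm_bounds (fun n => (cert n).1).
  split=> [x0k|_]; last first.
    by have [[-> _]|->] := trunc_cases v k; rewrite ?normr0 ?(ltW lam0).
  have vk_lam : `|v k| = lam.
    by rewrite vk_sg // normrN normrM gtr0_norm // normr_sg x0k mulr1.
  have vk_sup : `|v k| == supnorm v by rewrite eq_le sup_ub vk_lam sup_le.
  by rewrite /trunc vk_sup vk_sg.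
(* conversely the truncation is bounded by lam, hence so is v, since v
   attains its sup-norm at some j where it coincides with its truncation *)
have trunc_le n : `|trunc v n| <= lam.
  have [x0n|x0n] := eqVneq (x n) 0; first exact: (fixed n).2.
  by rewrite (fixed n).1 // normrN normrM gtr0_norm // normr_sg x0n mulr1.
have [j jmax] := c0_supnorm_attained hv.
have [sup_ub sup_le] := supnorm_bounds jmax.
have trunc_j : trunc v j = v j.
  have vj_sup : `|v j| == supnorm v by rewrite eq_le sup_ub sup_le.
  by rewrite /trunc vj_sup.
split; first by rewrite (le_trans (jmax k)) // -trunc_j trunc_le.
move=> x0k; have tk := (fixed k).1 x0k.
have [[<- _] //|t0] := trunc_cases v k.
by move: tk; rewrite t0 => /eqP; rewrite eq_sym oppr_eq0 mulf_eq0 sgr_eq0 gt_eqF //= (negPf x0k).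
Qed.

Definition subgradient {R : realType} {m : nat} (Q : ('I_m -> R) -> R) (y c : 'I_m -> R) :
  Prop := forall a, vinner c (fun j => a j - y j) <= Q a - Q y.

Section ConjugateProx.
Context {R : realType} {m : nat} (Q : ('I_m -> R) -> R).
Implicit Types a c d y : 'I_m -> R.

Lemma conjugate_ge a c : ((vinner a c - Q a)%:E <= conjugate Q c)%E.
Proof. by apply: ereal_sup_ubound; exists a. Qed.

Lemma conjugate_subgradient {y c} : subgradient Q y c -> conjugate Q c = (vinner y c - Q y)%:E.
Proof.
move=> hc; apply/le_anti; rewrite conjugate_ge andbT.
apply: ge_ereal_sup => _ [a _ <-]; rewrite lee_fin.
by have := hc a; rewrite vinnerB (vinnerC c a) (vinnerC c y); lra.
Qed.

Lemma conjugate_convex {c0 c1} {q0 q1 t : R} : 0 <= t -> t <= 1 ->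
  (conjugate Q c0 <= q0%:E)%E -> (conjugate Q c1 <= q1%:E)%E ->
  (conjugate Q (fun j => ((1 - t) * c0 j + t * c1 j)%R) <= ((1 - t) * q0 + t * q1)%R%:E)%E.
Proof.
move=> t0 t1 h0 h1; apply: ge_ereal_sup => _ [a _ <-]; rewrite lee_fin vinnerDZ.
have a0 : vinner a c0 - Q a <= q0 by rewrite -lee_fin (le_trans (conjugate_ge a c0)).
have a1 : vinner a c1 - Q a <= q1 by rewrite -lee_fin (le_trans (conjugate_ge a c1)).
have := ler_wpM2l (_ : 0 <= 1 - t) a0; have := ler_wpM2l t0 a1.
lra.
Qed.

Lemma half_vnorm2_shift c d y :
  2^-1 * vnorm2 (fun j => c j + y j - d j) =
  2^-1 * vnorm2 (fun j => c j + y j - c j) - vinner y (fun j => d j - c j) +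
  2^-1 * vnorm2 (fun j => d j - c j).
Proof.
rewrite /vnorm2 /vinner !mulr_sumr -sumrB -big_split /=.
by apply: eq_bigr => j _; rewrite !expr2; field.
Qed.

Lemma prox_of_subgradient y c :
  subgradient Q y c -> is_prox (conjugate Q) (fun j => c j + y j) c.
Proof.
move=> hc d; rewrite (conjugate_subgradient hc).
apply: le_trans (leeD (lexx _) (conjugate_ge y d)); rewrite -!EFinD lee_fin.
rewrite (half_vnorm2_shift c d y) vinnerB.
have : 0 <= 2^-1 * vnorm2 (fun j => d j - c j) by rewrite mulr_ge0 ?invr_ge0 ?vnorm2_ge0.
lra.
Qed.

(* Conversely, the prox fixed point is a subgradient, provided Q has some
   subgradient c0 at y: compare c with the points of the segment [c, c0]. *)
Lemma subgradient_of_prox {y c c0} : subgradient Q y c0 ->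
  is_prox (conjugate Q) (fun j => c j + y j) c -> subgradient Q y c.
Proof.
move=> hc0 hprox; have conj_c0 := conjugate_subgradient hc0.
set q0 := vinner y c0 - Q y in conj_c0.
have [q conj_c] : exists q, conjugate Q c = q%:E.
  move: (conjugate_ge (fun _ => 0) c) (hprox c0); rewrite conj_c0.
  by case: (conjugate Q c) => [q _ _|//|//]; exists q.
pose e j := c0 j - c j.
have q_le : q <= vinner y c - Q y.
  suff : q <= q0 - vinner y e by rewrite /q0 /e vinnerB; lra.
  have K0 : 0 <= 2^-1 * vnorm2 e by rewrite mulr_ge0 ?invr_ge0 ?vnorm2_ge0.
  apply: (ler_of_vanishing_perturbation K0) => t t0 t1.
  have le_c : (conjugate Q c <= q%:E)%E by rewrite conj_c.
  have le_c0 : (conjugate Q c0 <= q0%:E)%E by rewrite conj_c0.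
  have := conjugate_convex (ltW t0) t1 le_c le_c0.
  pose d j := (1 - t) * c j + t * c0 j.
  move/(leeD (lexx (2^-1 * vnorm2 (fun j => c j + y j - d j))%:E)).
  move/(le_trans (hprox d)); rewrite conj_c -!EFinD lee_fin.
  rewrite (half_vnorm2_shift c d y) (_ : (fun j => d j - c j) = fun j => t * e j); last first.
    by apply: funext => j; rewrite /d /e; ring.
  rewrite vinnerZ vnorm2Z expr2 => h.
  have : t * q <= t * (q0 - vinner y e + t * (2^-1 * vnorm2 e)) by lra.
  by rewrite ler_pM2l.
move=> a; rewrite vinnerB.
have := conjugate_ge a c; rewrite conj_c lee_fin (vinnerC a c).
by rewrite (vinnerC y c) in q_le; lra.
Qed.

(* A convex function on R^m has a subgradient everywhere (Lagrange multiplier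
   for Phi (z, _) := Q (y + z) - Q y). *)
Lemma subgradient_exists y : convex_fun Q -> exists c, subgradient Q y c.
Proof.
move=> Q_convex.
have [c hc] : exists c, forall z (x : unit), True ->
    vinner c z <= Q (fun j => y j + z j) - Q y.
  apply: (lagrange_multiplier (mix := fun _ _ _ => tt))
    => [//|t z1 z2 _ _ t0 t1 _ _|_ _|]; last by exists tt.
  - have := Q_convex (fun j => y j + z1 j) (fun j => y j + z2 j) t t0 t1.
    rewrite (_ : (fun j => t * (y j + z1 j) + (1 - t) * (y j + z2 j)) =
                 fun j => y j + (t * z1 j + (1 - t) * z2 j)); first lra.
    by apply: funext => j; ring.
  - by rewrite (_ : (fun j => _) = y) ?subrr //; apply: funext => j; rewrite addr0.
exists c => a; have := hc (fun j => a j - y j) tt I.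
by rewrite (_ : (fun j => y j + (a j - y j)) = a) //; apply: funext => j; rewrite addrC subrK.
Qed.

End ConjugateProx.

Section FermatRule.
Context {R : realType} {m : nat} (us : 'I_m -> R^nat) (Q : ('I_m -> R) -> R)
  (lam : R) (x0 : R^nat).
Hypotheses (us_c0 : forall j, in_c0 (us j)) (Q_convex : convex_fun Q)
  (lam_gt0 : 0 < lam) (x0_l1 : in_l1 x0).

Let us_bounded j : bounded_seq (us j) := c0_bounded (us_c0 j).

Let excess (z : 'I_m -> R) (x : R^nat) : R :=
  Q (fun j => Lop us x j + z j) + lam * l1norm x - (Q (Lop us x0) + lam * l1norm x0).

Lemma excess_convex t z1 z2 x1 x2 : 0 <= t -> t <= 1 -> in_l1 x1 -> in_l1 x2 ->
  excess (fun j => t * z1 j + (1 - t) * z2 j) (fun k => t * x1 k + (1 - t) * x2 k) <=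
  t * excess z1 x1 + (1 - t) * excess z2 x2.
Proof.
move=> t0 t1 h1 h2; rewrite /excess.
rewrite (_ : (fun j => _) = fun j => t * (Lop us x1 j + z1 j) + (1 - t) * (Lop us x2 j + z2 j)).
  have := Q_convex (fun j => Lop us x1 j + z1 j) (fun j => Lop us x2 j + z2 j) t t0 t1.
  have := ler_wpM2l (ltW lam_gt0) (l1norm_convex t0 t1 h1 h2).
  lra.
by apply: funext => j; rewrite /Lop seq_innerDZ //; ring.
Qed.

(* The multiplier of the excess is a subgradient of Q at L x0 whose adjoint
   certifies x0, and conversely such a c makes x0 optimal. *)
Lemma solution_iff_certificate : is_solution us Q lam x0 <->
  exists c, subgradient Q (Lop us x0) c /\ l1_certificate lam (Ladj us c) x0.
Proof.
have Ladj_bounded c : bounded_seq (Ladj us c) := c0_bounded (Ladj_c0 us c us_c0).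
split=> [[_ x0_opt]|[c [c_sub cert]]]; last first.
  split=> // x hx; have := c_sub (Lop us x).
  have := minimizer_of_certificate lam (Ladj_bounded c) x0_l1 cert _ hx.
  by rewrite vinnerB !(vinner_Lop us c _ us_bounded) //; lra.
have [c hc] : exists c, forall z x, in_l1 x -> vinner c z <= excess z x.
  apply: (lagrange_multiplier (mix := fun t x1 x2 k => t * x1 k + (1 - t) * x2 k))
    => [t x1 x2 _ _|t z1 z2 x1 x2|x hx|]; last by exists x0.
  - exact: in_l1DZ.
  - exact: excess_convex.
  - rewrite /excess (_ : (fun j => _) = Lop us x); last by apply: funext => j; rewrite addr0.
    by have := x0_opt x hx; lra.
exists c; split.
  move=> a; have := hc (fun j => a j - Lop us x0 j) x0 x0_l1.
  rewrite /excess (_ : (fun j => Lop us x0 j + (a j - Lop us x0 j)) = a); first lra.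
  by apply: funext => j; rewrite addrC subrK.
apply: certificate_of_minimizer (Ladj_bounded c) x0_l1 (ltW lam_gt0) _ => x hx.
have := hc (fun j => Lop us x0 j - Lop us x j) x hx.
rewrite /excess (_ : (fun j => Lop us x j + (Lop us x0 j - Lop us x j)) = Lop us x0).
  by rewrite vinnerB !(vinner_Lop us c _ us_bounded) //; lra.
by apply: funext => j; rewrite addrC subrK.
Qed.

End FermatRule.

Theorem mainTheorem20 (R : realType) (m : nat) (us : 'I_m -> R^nat)
  (hus : forall j, in_c0 (us j))
  (Q : ('I_m -> R) -> R) (hQpos : forall a, 0 <= Q a) (hQconv : convex_fun Q)
  (lam : R) (hlam : 0 < lam) (x0 : R^nat) (hx0 : in_l1 x0) :
  is_solution us Q lam x0 <->
  exists chat : 'I_m -> R,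
    is_prox (conjugate Q) (fun j => chat j + Lop us x0 j) chat /\
    x0 = prox_l1 (fun k => x0 k - lam^-1 * trunc (Ladj us chat) k).
Proof.
rewrite solution_iff_certificate //.
split=> -[c [c_sub cert]]; exists c; split.
- exact: prox_of_subgradient.
- by apply/certificate_iff_fixed_point => //; exact: Ladj_c0.
- have [c0 hc0] := subgradient_exists Q (Lop us x0) hQconv.
  exact: subgradient_of_prox hc0 c_sub.
- by apply/certificate_iff_fixed_point => //; exact: Ladj_c0.
Qed.
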